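(* For every $\lambda>0$, \[ \lambda\,u(1_{S_{\mathrm u}},\lambda)\le\big(\mathfrak p_{i,j}(S_{\mathrm u})\big)_{(i,j)\in\mathcal{IJ}} \] (coordinatewise). Moreover, equality holds provided $\mathfrak p_{i,j}(S_{\mathrm u})=1$ for all $(i,j)\in\mathcal{IJ}$.
   Context: Let $S_1,\dots,S_N$ be disjoint compact metrizable separable spaces and $A_i$ generators of Feller semigroups (positive contraction semigroups, not necessarily conservative) on $C(S_i)$ with resolvents $R_{\lambda,i}=(\lambda-A_i)^{-1}$. Assume $A_1,\dots,A_M$ ($1\le M\le N$) are not conservative and the rest conservative. For $i\in\mathcal M=\{1,\dots,M\}$, assume the kernel of $A_i$ is trivial and there are continuous functions $\phi^{i,j}$, $j=1,\dots,\kappa(i)$, with $0\le\phi^{i,j}\le1_{S_i}$, $\lambda R_{\lambda,i}\phi^{i,j}\le\phi^{i,j}$ for all $\lambda>0$, $\lambda R_{\lambda,i}\phi^{i,j}\ne\phi^{i,j}$, and $\sum_{j=1}^{\kappa(i)}\phi^{i,j}=1_{S_i}$. Let $\ell^{i,j}_\lambda=\phi^{i,j}-\lambda R_{\lambda,i}\phi^{i,j}$, $\mathcal{IJ}=\{(i,j):i\in\mathcal M,1\le j\le\kappa(i)\}$, $\kappa=\sum_{i\in\mathcal M}\kappa(i)$. Let $S_{\mathrm u}$ be the disjoint union of the $S_i$ (functions on $S_i$ extended by zero; $f_i=f1_{S_i}$), $R^{\mathrm{du}}_\lambda f=\sum_{i=1}^NR_{\lambda,i}f_i$, and $\mathfrak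 p_{i,j}$, $(i,j)\in\mathcal{IJ}$, Borel sub-probability measures on $S_{\mathrm u}$. Let $N_\lambda:\mathbb R^\kappa\to\mathbb R^\kappa$, $(N_\lambda w)_{i,j}=\sum_{k\in\mathcal M}\sum_{l=1}^{\kappa(k)}w_{k,l}\int_{S_k}\ell^{k,l}_\lambda\,\mathrm d\mathfrak p_{i,j}$; $\|N_\lambda\|<1$ and $M_\lambda=I-N_\lambda$ is invertible. For $f\in C(S_{\mathrm u})$, $v(f,\lambda)=\big(\int_{S_{\mathrm u}}R^{\mathrm{du}}_\lambda f\,\mathrm d\mathfrak p_{i,j}\big)_{(i,j)\in\mathcal{IJ}}$ and $u(f,\lambda)=M_\lambda^{-1}v(f,\lambda)$, i.e. the unique solution of $u=v(f,\lambda)+N_\lambda u$. *)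

From mathcomp Require Import all_boot all_order all_algebra all_classical all_reals all_analysis.
Import numFieldNormedType.Exports.
Set Implicit Arguments.
Unset Strict Implicit.
Unset Printing Implicit Defensive.
Import Order.TTheory GRing.Theory Num.Theory.
Local Open Scope classical_set_scope.
Local Open Scope ring_scope.

Section Defs.
Context {R : realType} {T : pseudoPMetricType R}.

Definition Borel := g_sigma_algebraType (@open T).

(** C(D), for a clopen piece D of T, realised as the continuous functions on
    T vanishing outside D ("functions on S_i extended by zero"). *)
Definition Cext (D : set T) : set (T -> R) :=
  [set f | continuous f /\ forall x, ~ D x -> f x = 0].

Definition feller_semigroup (D : set T) (P : R -> (T -> R) -> (T -> R)) : Prop :=
  (forall t f, 0 <= t -> Cext D f -> Cext D (P t f)) /\
  (forall t (a : R) f g, 0 <= t -> Cext D f -> Cext D g ->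
     P t (fun x => a * f x + g x) = (fun x => a * P t f x + P t g x)) /\
  (forall t f, 0 <= t -> Cext D f -> (forall x, 0 <= f x) ->
     forall x, 0 <= P t f x) /\
  (forall t f (c : R), 0 <= t -> Cext D f -> (forall x, `|f x| <= c) ->
     forall x, `|P t f x| <= c) /\
  (forall f, Cext D f -> P 0 f = f) /\
  (forall s t f, 0 <= s -> 0 <= t -> Cext D f -> P (s + t) f = P s (P t f)) /\
  (forall f, Cext D f -> forall e : R, 0 < e ->
     \forall t \near 0^'+, forall x, `|P t f x - f x| <= e).

Definition udiff_quot (P : R -> (T -> R) -> (T -> R)) (f g : T -> R) : Prop :=
  forall e : R, 0 < e ->
    \forall t \near 0^'+, forall x, `|(P t f x - f x) / t - g x| <= e.

Definition is_generator (D : set T) (P : R -> (T -> R) -> (T -> R))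
    (domA : set (T -> R)) (A : (T -> R) -> (T -> R)) : Prop :=
  (forall f, domA f <-> (Cext D f /\ exists g, Cext D g /\ udiff_quot P f g)) /\
  (forall f, domA f -> Cext D (A f) /\ udiff_quot P f (A f)).

Definition feller_generator (D : set T) (domA : set (T -> R))
    (A : (T -> R) -> (T -> R)) : Prop :=
  exists P, feller_semigroup D P /\ is_generator D P domA A.

Definition conservative (D : set T) (domA : set (T -> R))
    (A : (T -> R) -> (T -> R)) : Prop :=
  domA (\1_D) /\ A (\1_D) = (fun=> 0).

Definition trivial_kernel (domA : set (T -> R)) (A : (T -> R) -> (T -> R)) : Prop :=
  forall f, domA f -> A f = (fun=> 0) -> f = (fun=> 0).

Definition is_resolvent (D : set T) (domA : set (T -> R))
    (A : (T -> R) -> (T -> R)) (lam : R) (Rl : (T -> R) -> (T -> R)) : Prop :=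
  (forall f, Cext D f -> domA (Rl f) /\ (fun x => lam * Rl f x - A (Rl f) x) = f) /\
  (forall g, domA g -> Rl (fun x => lam * g x - A g x) = g).

Definition Rdu (n : nat) (S : 'I_n -> set T)
    (Rs : 'I_n -> R -> (T -> R) -> (T -> R)) (lam : R) (f : T -> R) : T -> R :=
  fun x => \sum_(i < n) Rs i lam (fun y => f y * \1_(S i) y) x.

Section Indexed.
Variables (M K : nat) (kappa : 'I_M -> nat).
Variables (S : 'I_(M + K) -> set T) (Rs : 'I_(M + K) -> R -> (T -> R) -> (T -> R)).
Variables (phi : forall i : 'I_M, 'I_(kappa i) -> T -> R).
Variables (p : {i : 'I_M & 'I_(kappa i)} -> {measure set Borel -> \bar R}).

Definition ell (lam : R) (k : 'I_M) (l : 'I_(kappa k)) : T -> R :=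
  fun x => phi l x - lam * Rs (lshift K k) lam (phi l) x.

Definition Nmat (lam : R) (a b : {i : 'I_M & 'I_(kappa i)}) : R :=
  Rintegral (p a) (S (lshift K (tag b))) (ell lam (tagged b)).

(** Operator norm of N_lam on (R^kappa, sup norm): max row sum. *)
Definition Nnorm (lam : R) : R :=
  \big[Num.max/0]_(a : {i : 'I_M & 'I_(kappa i)})
     \sum_(b : {i : 'I_M & 'I_(kappa i)}) `|Nmat lam a b|.

Definition vvec (f : T -> R) (lam : R) : {i : 'I_M & 'I_(kappa i)} -> R :=
  fun a => Rintegral (p a) setT (Rdu S Rs lam f).

Definition uvec (f : T -> R) (lam : R) : {i : 'I_M & 'I_(kappa i)} -> R :=
  xget (fun=> 0) [set w : {i : 'I_M & 'I_(kappa i)} -> R |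
    forall a, w a = vvec f lam a + \sum_b Nmat lam a b * w b].

End Indexed.
End Defs.

(* With w := lam u(1, lam) - 1, everything follows from the affine equation
   w = (p(S_u) - 1) + N_lam w.  It comes from integrating the identity
   lam R^du_lam 1 = 1 - sum_(k,l) ell^(k,l)_lam against p_(i,j): a conservative
   piece contributes lam R_lam,i 1_(S_i) = 1_(S_i), and a non-conservative one
   lam R_lam,i 1_(S_i) = sum_j lam R_lam,i phi^(i,j) = 1_(S_i) - sum_j ell^(i,j)_lam,
   because the phi^(i,j) sum to 1_(S_i).  Excessivity of the phi^(i,j) makes N_lam
   entrywise nonnegative, and since its max row sum is < 1, looking at the largest
   coordinate of w shows w <= 0 when p(S_u) <= 1 and w = 0 when p(S_u) = 1. *)

From mathcomp Require Import all_boot all_order all_algebra all_classical all_reals all_analysis.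
From mathcomp Require Import ring lra measurable_realfun.
Import numFieldNormedType.Exports.
Import Order.TTheory GRing.Theory Num.Theory.
Set Implicit Arguments.
Unset Strict Implicit.
Unset Printing Implicit Defensive.
Local Open Scope classical_set_scope.
Local Open Scope ring_scope.

Lemma mx_solvable_of_ker0 (F : fieldType) n (B : 'M[F]_n) :
  (forall x : 'cV_n, B *m x = 0 -> x = 0) -> forall v : 'cV_n, exists x, B *m x = v.
Proof.
move=> ker0 v; exists (invmx B *m v); rewrite mulmxA mulmxV ?mul1mx //.
rewrite unitmxE unitfE -det_tr; apply/negP => /det0P [r /eqP r0 hr]; apply: r0.
by rewrite -[r]trmxK [r^T]ker0 ?trmx0 // -[B]trmxK -trmx_mul hr trmx0.
Qed.

Section MaxRowSum.
Variables (R : realFieldType) (I : finType) (N : I -> I -> R).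

Definition max_row_sum := \big[Num.max/0]_(a : I) \sum_(b : I) `|N a b|.

Lemma sum_le_max_row_sum a (c : I -> R) m : 0 <= m ->
  (forall b, c b <= `|N a b| * m) -> \sum_b c b <= max_row_sum * m.
Proof.
move=> m0 hc; apply: le_trans (ler_sum _ (fun b _ => hc b)) _.
rewrite -mulr_suml ler_wpM2r //.
exact: (le_bigmax 0 (fun a => \sum_b `|N a b|) a).
Qed.

Lemma le0_of_contraction (g : I -> R) : max_row_sum < 1 ->
  (forall a, g a <= max_row_sum * \big[Num.max/0]_b g b) -> forall a, g a <= 0.
Proof.
move=> lt1 hg a; set m := \big[Num.max/0]_b g b.
have m0 : 0 <= m by exact: bigmax_ge_id.
have : m <= max_row_sum * m.
  by apply: bigmax_le => [|b _]; rewrite ?mulr_ge0 ?bigmax_ge_id.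
rewrite -subr_le0 -{1}[m]mul1r -mulrBl pmulr_rle0 ?subr_gt0 // => m_le0.
exact: le_trans (le_bigmax 0 g a) m_le0.
Qed.

Hypothesis contraction : max_row_sum < 1.

Lemma fixpoint_eq0 (d : I -> R) :
  (forall a, d a = \sum_b N a b * d b) -> forall a, d a = 0.
Proof.
move=> hd a; apply/normr0_eq0/le_anti; rewrite normr_ge0 andbT.
apply: (le0_of_contraction (g := fun a => `|d a|)) contraction _ a => {}a.
rewrite [in leLHS]hd; apply: le_trans (ler_norm_sum _ _ _) _.
apply: sum_le_max_row_sum => [|b]; first exact: bigmax_ge_id.
by rewrite normrM; apply: ler_wpM2l => //; exact: le_bigmax 0 (fun b => `|d b|) b.
Qed.

Lemma sub_fixpoint_le0 (d : I -> R) : (forall a b, 0 <= N a b) ->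
  (forall a, d a <= \sum_b N a b * d b) -> forall a, d a <= 0.
Proof.
move=> N0 hd; apply: le0_of_contraction contraction _ => a.
apply: le_trans (hd a) _; apply: sum_le_max_row_sum => [|b]; first exact: bigmax_ge_id.
by rewrite ger0_norm //; apply: ler_wpM2l => //; exact: le_bigmax 0 d b.
Qed.

Lemma affine_fixpoint_exists (v : I -> R) :
  exists w : I -> R, forall a, w a = v a + \sum_b N a b * w b.
Proof.
pose B : 'M[R]_#|I| := \matrix_(i, j) ((i == j)%:R - N (enum_val i) (enum_val j)).
have BE (x : 'cV_#|I|) a : (B *m x) (enum_rank a) 0 =
    x (enum_rank a) 0 - \sum_b N a b * x (enum_rank b) 0.
  rewrite !mxE (reindex (@enum_rank I)) /=; last first.
    by exists enum_val => y _; [exact: enum_rankK | exact: enum_valK].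
  under eq_bigr do rewrite !mxE !enum_rankK mulrBl.
  rewrite sumrB (bigD1 a) //= eqxx mul1r big1 ?addr0 // => b ba.
  by rewrite (inj_eq enum_rank_inj) eq_sym (negbTE ba) mul0r.
have [|x Bx] := @mx_solvable_of_ker0 _ _ B _ (\col_i v (enum_val i)).
  move=> x Bx0; apply/matrixP => i j; rewrite ord1 !mxE -(enum_valK i).
  apply: (fixpoint_eq0 (d := fun b => x (enum_rank b) 0)) => a.
  by apply/eqP; rewrite -subr_eq0 -BE Bx0 mxE.
exists (fun b => x (enum_rank b) 0) => a.
by move/matrixP: Bx => /(_ (enum_rank a) 0); rewrite BE mxE enum_rankK => <-; rewrite subrK.
Qed.

End MaxRowSum.

Section Generators.
Variables (R : realType) (T : pseudoPMetricType R).
Implicit Types (D : set T) (f g : T -> R) (P : R -> (T -> R) -> (T -> R)).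

Lemma Cext0 D : Cext D (fun=> 0).
Proof. by split => //; exact: cst_continuous. Qed.

Lemma Cext_lin D (a : R) f g : Cext D f -> Cext D g ->
  Cext D (fun x => a * f x + g x).
Proof.
move=> [cf zf] [cg zg]; split => [x|x Dx]; last by rewrite zf // zg // mulr0 addr0.
by apply: cvgD; [apply: cvgMl_tmp; exact: cf | exact: cg].
Qed.

Lemma Cext_sum D n (F : 'I_n -> T -> R) : (forall j, Cext D (F j)) ->
  Cext D (fun x => \sum_(j < n) F j x).
Proof.
elim: n F => [|n IHn] F CF; first by under eq_fun do rewrite big_ord0; exact: Cext0.
have -> : (fun x => \sum_(j < n.+1) F j x) =
    (fun x => 1 * \sum_(j < n) F (widen_ord (leqnSn n) j) x + F ord_max x).
  by apply/funext => x; rewrite big_ord_recr mul1r.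
by apply: Cext_lin => //; apply: IHn.
Qed.

Lemma udiff_quot_unique P f g1 g2 :
  udiff_quot P f g1 -> udiff_quot P f g2 -> g1 = g2.
Proof.
move=> h1 h2; apply/funext => x; apply/eqP; rewrite -subr_eq0 -normr_le0.
apply/unstable.ler_gtP => e e0.
have e2 : 0 < e / 2 by rewrite divr_gt0.
have [t [ht1 ht2]] := @filter_ex _ _ (at_right_proper_filter 0) _ (filterI (h1 _ e2) (h2 _ e2)).
set q := (P t f x - f x) / t; have := ht1 x; have := ht2 x; rewrite -/q => b2 b1.
have -> : g1 x - g2 x = (q - g2 x) - (q - g1 x) by ring.
by apply: le_trans (ler_normB _ _) _; rewrite (splitr e) lerD.
Qed.

Lemma udiff_quot_lin P (a : R) f g df dg :
  (forall t, 0 < t -> P t (fun x => a * f x + g x) = (fun x => a * P t f x + P t g x)) ->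
  udiff_quot P f df -> udiff_quot P g dg ->
  udiff_quot P (fun x => a * f x + g x) (fun x => a * df x + dg x).
Proof.
move=> Plin hf hg e e0.
have a1 : 0 < `|a| + 1 by rewrite ltr_pwDr.
have ef : 0 < e / 2 / (`|a| + 1) by rewrite !divr_gt0.
near=> t => x.
have t0 : 0 < t by near: t; exact: nbhs_right_gt.
have bf : forall x, `|(P t f x - f x) / t - df x| <= e / 2 / (`|a| + 1).
  by near: t; exact: hf.
have bg : forall x, `|(P t g x - g x) / t - dg x| <= e / 2.
  by near: t; apply: hg; rewrite divr_gt0.
rewrite Plin //.
have -> : (a * P t f x + P t g x - (a * f x + g x)) / t - (a * df x + dg x) =
    a * ((P t f x - f x) / t - df x) + ((P t g x - g x) / t - dg x).
  by rewrite !mulrBl mulrDl !mulrBr -!mulrA; ring.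
apply: le_trans (ler_normD _ _) _; rewrite (splitr e) lerD // normrM.
apply: le_trans (ler_wpM2l (normr_ge0 a) (bf x)) _.
by rewrite mulrA ler_pdivrMr // [leLHS]mulrC ler_pM2l ?lerDl // divr_gt0.
Unshelve. all: end_near.
Qed.

Variables (D : set T) (domA : set (T -> R)) (A : (T -> R) -> (T -> R)).
Hypothesis genA : feller_generator D domA A.

Lemma generator_dom_Cext f : domA f -> Cext D f.
Proof. by case: genA => P [_ [domAE _]] /domAE[]. Qed.

Lemma generator_lin (a : R) f g : domA f -> domA g ->
  domA (fun x => a * f x + g x) /\
  A (fun x => a * f x + g x) = (fun x => a * A f x + A g x).
Proof.
case: genA => P [[_ [Plin _]] [domAE AE]] df dg.
have [[Cf _] [Cg _]] := ((domAE f).1 df, (domAE g).1 dg).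
have [[CAf uf] [CAg ug]] := (AE f df, AE g dg).
have u : udiff_quot P (fun x => a * f x + g x) (fun x => a * A f x + A g x).
  by apply: udiff_quot_lin uf ug => t t0; apply: Plin; rewrite ?ltW.
have dh : domA (fun x => a * f x + g x).
  apply/domAE; split; first exact: Cext_lin.
  by exists (fun x => a * A f x + A g x); split; first exact: Cext_lin.
by split => //; apply: udiff_quot_unique (AE _ dh).2 u.
Qed.

Variables (lam : R) (Rl : (T -> R) -> (T -> R)).
Hypothesis resRl : is_resolvent D domA A lam Rl.

Lemma resolvent_lin (a : R) f g : Cext D f -> Cext D g ->
  Rl (fun x => a * f x + g x) = (fun x => a * Rl f x + Rl g x).
Proof.
case: resRl => Rl_dom RlK Cf Cg.
have [[df ef] [dg eg]] := (Rl_dom f Cf, Rl_dom g Cg).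
have [dh Ah] := generator_lin a df dg.
rewrite -[RHS]RlK // Ah; congr Rl; apply/funext => x.
by rewrite -[in LHS]ef -[in LHS]eg /=; ring.
Qed.

Lemma resolvent0 : Rl (fun=> 0) = (fun=> 0).
Proof.
have := resolvent_lin (-1) (Cext0 D) (Cext0 D).
by under eq_fun do rewrite mulr0 addr0; under [RHS]eq_fun do rewrite mulN1r addNr.
Qed.

Lemma resolvent_sum n (F : 'I_n -> T -> R) : (forall j, Cext D (F j)) ->
  Rl (fun x => \sum_(j < n) F j x) = (fun x => \sum_(j < n) Rl (F j) x).
Proof.
elim: n F => [|n IHn] F CF.
  by under eq_fun do rewrite big_ord0; rewrite resolvent0; under [RHS]eq_fun do rewrite big_ord0.
have -> : (fun x => \sum_(j < n.+1) F j x) =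
    (fun x => 1 * \sum_(j < n) F (widen_ord (leqnSn n) j) x + F ord_max x).
  by apply/funext => x; rewrite big_ord_recr mul1r.
rewrite resolvent_lin ?IHn //; last exact: Cext_sum.
by apply/funext => x; rewrite big_ord_recr mul1r.
Qed.

Lemma resolvent_conservative : conservative D domA A -> forall x,
  lam * Rl \1_D x = \1_D x.
Proof.
move=> [d1 A1] x; have := resolvent_lin lam (generator_dom_Cext d1) (Cext0 D).
have -> : (fun y => lam * \1_D y + 0) = (fun y => lam * \1_D y - A \1_D y).
  by apply/funext => y; rewrite A1 subr0 addr0.
by rewrite resRl.2 // resolvent0 => /(congr1 (fun h => h x)) /=; rewrite addr0.
Qed.

End Generators.

Section FiniteMeasureIntegrals.
Variables (d : measure_display) (X : measurableType d) (R : realType) (mu : measure X R).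

Lemma bounded_integrable (f : X -> R) (c : R) : (mu setT < +oo)%E ->
  measurable_fun setT f -> (forall x, `|f x| <= c) -> mu.-integrable setT (EFin \o f).
Proof.
move=> mu_fin mf fc; apply/integrableP; split; first exact/measurable_EFinP.
apply: le_lt_trans (integral_le_bound `|c|%:E _ _ _ _) _ => //.
- exact/measurable_EFinP.
- by apply: aeW => x _ /=; rewrite lee_fin (le_trans (fc x)) ?ler_norm.
- by rewrite lte_mul_pinfty.
Qed.

Variables (I : Type) (F : I -> X -> R).
Hypothesis intF : forall b, mu.-integrable setT (EFin \o F b).

Lemma integrable_sumr (r : seq I) :
  mu.-integrable setT (EFin \o (fun x => \sum_(b <- r) F b x)).
Proof.
have -> : EFin \o (fun x => \sum_(b <- r) F b x) = (fun x => \sum_(b <- r) (F b x)%:E).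
  by apply/funext => x /=; rewrite sumEFin.
by apply: integrable_sum => // b _; exact: intF.
Qed.

Lemma Rintegral_sum (r : seq I) :
  Rintegral mu setT (fun x => \sum_(b <- r) F b x) = \sum_(b <- r) Rintegral mu setT (F b).
Proof.
elim: r => [|b r IHr].
  by under eq_Rintegral do rewrite big_nil; rewrite big_nil Rintegral_cst // mul0r.
under eq_Rintegral do rewrite big_cons.
by rewrite big_cons RintegralD ?IHr //; exact: integrable_sumr.
Qed.

End FiniteMeasureIntegrals.

Section BorelIntegrals.
Variables (R : realType) (T : pseudoPMetricType R).

Lemma continuous_Borel_measurable (f : T -> R) : continuous f ->
  measurable_fun (setT : set (@Borel R T)) f.
Proof.
move=> /continuousP fC; apply: (measurability _ (RGenOpens.measurableE R)).
move=> _ [_ [a [b ->]] <-]; rewrite setTI; apply: sub_sigma_algebra.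
exact/fC/interval_open.
Qed.

Lemma Cext_bounded (D : set T) f : compact D -> Cext D f ->
  exists c, forall x, `|f x| <= c.
Proof.
move=> cD [fC f0].
have [c [_ fc]] := compact_bounded (continuous_compact (continuous_subspaceT fC) cD).
exists (Num.max (c + 1) 0) => x; rewrite le_max; apply/orP.
have [Dx|nDx] := pselect (D x); last by right; rewrite f0 ?normr0.
by left; apply: fc; [rewrite ltrDl | exists x].
Qed.

Lemma Cext_integrable (D : set T) f (mu : measure (@Borel R T) R) :
  compact D -> (mu setT < +oo)%E -> Cext D f -> mu.-integrable setT (EFin \o f).
Proof.
move=> cD mu_fin Cf; have [c fc] := Cext_bounded cD Cf.
exact: bounded_integrable mu_fin (continuous_Borel_measurable Cf.1) fc.
Qed.

End BorelIntegrals.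

Lemma sum_indic_partition (R : pzRingType) (I : finType) (T : Type) (S : I -> set T) x :
  (forall i j, i != j -> S i `&` S j = set0) -> (exists i, S i x) ->
  \sum_i \1_(S i) x = 1 :> R.
Proof.
move=> S_disj [i Six]; rewrite (bigD1 i) //= big1 ?addr0 ?indicE ?mem_set // => j ji.
by rewrite indicE memNset // => Sjx; rewrite -[False]/(set0 x) -(S_disj _ _ ji).
Qed.

Section DisjointUnion.
Variables (R : realType) (T : pseudoPMetricType R) (M K : nat).
Variables (S : 'I_(M + K) -> set T) (domA : 'I_(M + K) -> set (T -> R)).
Variables (A : 'I_(M + K) -> (T -> R) -> (T -> R)).
Variables (Rs : 'I_(M + K) -> R -> (T -> R) -> (T -> R)).
Variables (kappa : 'I_M -> nat) (phi : forall i : 'I_M, 'I_(kappa i) -> T -> R).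
Variables (p : {i : 'I_M & 'I_(kappa i)} -> {measure set (@Borel R T) -> \bar R}).
Local Notation IJ := {i : 'I_M & 'I_(kappa i)}.

Hypothesis S_disj : forall i j, i != j -> S i `&` S j = set0.
Hypothesis S_cover : forall x, exists i, S i x.
Hypothesis S_compact : forall i, compact (S i).
Hypothesis genA : forall i, feller_generator (S i) (domA i) (A i).
Hypothesis resRs : forall i lam, 0 < lam -> is_resolvent (S i) (domA i) (A i) lam (Rs i lam).
Hypothesis consA : forall i : 'I_K,
  conservative (S (rshift M i)) (domA (rshift M i)) (A (rshift M i)).
Hypothesis phiC : forall i (j : 'I_(kappa i)), Cext (S (lshift K i)) (phi j).
Hypothesis phi_sum : forall i x, \sum_(j < kappa i) phi j x = \1_(S (lshift K i)) x.
Hypothesis phi_excessive : forall i (j : 'I_(kappa i)) lam x,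
  0 < lam -> lam * Rs (lshift K i) lam (phi j) x <= phi j x.
Hypothesis p_le1 : forall a, (p a setT <= 1)%E.

Variable lam : R.
Hypothesis lam_gt0 : 0 < lam.

Lemma Cext_ell k (l : 'I_(kappa k)) : Cext (S (lshift K k)) (ell Rs phi lam l).
Proof.
have CR := generator_dom_Cext (genA _) ((resRs _ lam_gt0).1 _ (phiC l)).1.
have -> : ell Rs phi lam l = (fun x => - lam * Rs (lshift K k) lam (phi l) x + phi l x).
  by apply/funext => x; rewrite /ell mulNr addrC.
exact (Cext_lin (- lam) CR (phiC l)).
Qed.

Lemma Nmat_ge0 a b : 0 <= Nmat S Rs phi p lam a b.
Proof. by apply: Rintegral_ge0 => x _; rewrite subr_ge0 phi_excessive. Qed.

Lemma Nmat_Rintegral a b :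
  Nmat S Rs phi p lam a b = Rintegral (p a) setT (ell Rs phi lam (tagged b)).
Proof.
rewrite /Nmat Rintegral_mkcond; congr Rintegral; apply/funext => x.
rewrite /patch; case: ifPn => // /negP xS.
by rewrite (Cext_ell (tagged b)).2 // => Sx; apply: xS; exact: mem_set.
Qed.

Lemma lam_Rdu1E x :
  lam * Rdu S Rs lam (fun=> 1) x = 1 - \sum_(b : IJ) ell Rs phi lam (tagged b) x.
Proof.
have sum_ell : \sum_(b : IJ) ell Rs phi lam (tagged b) x =
    \sum_(i < M) \sum_(j < kappa i) ell Rs phi lam j x.
  exact: esym (sig_big_dep xpredT (fun _ _ => true) (fun i j => ell Rs phi lam j x)).
rewrite /Rdu mulr_sumr big_split_ord sum_ell /=.
rewrite -[X in X - _](sum_indic_partition R S_disj (S_cover x)) big_split_ord /=.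
rewrite addrAC -sumrB; congr (_ + _); apply: eq_big => // i _.
  under eq_fun do rewrite mul1r -phi_sum.
  rewrite (resolvent_sum (genA _) (resRs _ lam_gt0)) ?mulr_sumr -?phi_sum -?sumrB //.
  by apply: eq_big => // j _; rewrite /ell opprB addrC subrK.
under eq_fun do rewrite mul1r.
exact (resolvent_conservative (genA _) (resRs _ lam_gt0) (consA i) x).
Qed.

Lemma lam_vvec1E a :
  lam * vvec S Rs p (fun=> 1) lam a = fine (p a setT) - \sum_b Nmat S Rs phi p lam a b.
Proof.
have p_fin : (p a setT < +oo)%E by apply: le_lt_trans (p_le1 a) (ltry 1).
have ell_int (b : IJ) : (p a).-integrable setT (EFin \o ell Rs phi lam (tagged b)).
  exact (Cext_integrable (@S_compact (lshift K (tag b))) p_fin (Cext_ell (tagged b))).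
pose sum_ell (x : @Borel R T) := \sum_(b : IJ) ell Rs phi lam (tagged b) x.
have one_int : (p a).-integrable setT (EFin \o cst 1).
  by apply: (bounded_integrable (c := 1) p_fin) => // x; rewrite normr1.
have diff_int : (p a).-integrable setT (EFin \o fun x => 1 - sum_ell x).
  have -> : EFin \o (fun x => 1 - sum_ell x) = ((EFin \o cst 1%R) \- (EFin \o sum_ell))%E.
    by apply/funext => x /=; rewrite EFinB.
  by apply: integrableB => //; exact: integrable_sumr.
rewrite /vvec.
have -> : Rdu S Rs lam (fun=> 1) = fun x => lam^-1 * (1 - sum_ell x).
  by apply/funext => x; rewrite -lam_Rdu1E mulKf ?gt_eqF.
rewrite RintegralZl // mulVKf ?gt_eqF // RintegralB //; last exact: integrable_sumr.
rewrite Rintegral_cst // mul1r Rintegral_sum //; congr (_ - _).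
by apply: eq_bigr => b _; rewrite Nmat_Rintegral.
Qed.

Hypothesis N_contraction : Nnorm S Rs phi p lam < 1.

Lemma uvec_fixpoint f : forall a, uvec S Rs phi p f lam a =
  vvec S Rs p f lam a + \sum_b Nmat S Rs phi p lam a b * uvec S Rs phi p f lam b.
Proof.
(* [Nnorm] is [max_row_sum] of [Nmat]. *)
have [w wP] := affine_fixpoint_exists N_contraction (vvec S Rs p f lam).
by apply: (@xgetPex _ (fun=> 0) [set w | forall a,
  w a = vvec S Rs p f lam a + \sum_b Nmat S Rs phi p lam a b * w b]); exists w.
Qed.

Lemma lam_uvec1_sub1E a :
  lam * uvec S Rs phi p (fun=> 1) lam a - 1 = (fine (p a setT) - 1) +
    \sum_b Nmat S Rs phi p lam a b * (lam * uvec S Rs phi p (fun=> 1) lam b - 1).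
Proof.
rewrite uvec_fixpoint mulrDr lam_vvec1E mulr_sumr.
under [X in _ = _ + X]eq_bigr do rewrite mulrBr mulr1 mulrCA.
by rewrite sumrB; ring.
Qed.

End DisjointUnion.

Theorem lemma3 (R : realType) (T : pseudoPMetricType R)
  (M K : nat) (S : 'I_(M + K) -> set T)
  (domA : 'I_(M + K) -> set (T -> R)) (A : 'I_(M + K) -> (T -> R) -> (T -> R))
  (Rs : 'I_(M + K) -> R -> (T -> R) -> (T -> R))
  (kappa : 'I_M -> nat) (phi : forall i : 'I_M, 'I_(kappa i) -> T -> R)
  (p : {i : 'I_M & 'I_(kappa i)} -> {measure set (@Borel R T) -> \bar R}) :
  (* T = S_u is a separable metric space *)
  hausdorff_space T ->
  (exists E : set T, countable E /\ closure E = setT) ->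
  (* S_u is the disjoint union of the compact (clopen) pieces S_i *)
  (forall i j, i != j -> S i `&` S j = set0) ->
  (forall x, exists i, S i x) ->
  (forall i, open (S i) /\ compact (S i)) ->
  (0 < M)%N ->
  (* generators of Feller semigroups and their resolvents *)
  (forall i, feller_generator (S i) (domA i) (A i)) ->
  (forall i lam, 0 < lam -> is_resolvent (S i) (domA i) (A i) lam (Rs i lam)) ->
  (* A_1..A_M non-conservative, the others conservative *)
  (forall i : 'I_M, ~ conservative (S (lshift K i)) (domA (lshift K i)) (A (lshift K i))) ->
  (forall i : 'I_K, conservative (S (rshift M i)) (domA (rshift M i)) (A (rshift M i))) ->
  (forall i : 'I_M, trivial_kernel (domA (lshift K i)) (A (lshift K i))) ->
  (* the functions phi^{i,j} *)
  (forall i j, Cext (S (lshift K i)) (phi i j)) ->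
  (forall i j x, 0 <= phi i j x /\ phi i j x <= \1_(S (lshift K i)) x) ->
  (forall i j lam x, 0 < lam -> lam * Rs (lshift K i) lam (phi i j) x <= phi i j x) ->
  (forall i j lam, 0 < lam -> (fun x => lam * Rs (lshift K i) lam (phi i j) x) <> phi i j) ->
  (forall i x, \sum_(j < kappa i) phi i j x = \1_(S (lshift K i)) x) ->
  (* Borel sub-probability measures *)
  (forall a, (p a setT <= 1)%E) ->
  (* ||N_lam|| < 1 *)
  (forall lam, 0 < lam -> Nnorm S Rs phi p lam < 1) ->
  (forall lam, 0 < lam -> forall a,
     lam * uvec S Rs phi p (fun=> 1) lam a <= fine (p a setT)) /\
  ((forall a, p a setT = 1%E) ->
   forall lam, 0 < lam -> forall a, lam * uvec S Rs phi p (fun=> 1) lam a = 1).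
Proof.
move=> _ _ S_disj S_cover S_oc _ genA resRs _ consA _ phiC _ phi_exc _ phi_sum p_le1 N_lt1.
have S_compact i : compact (S i) := (S_oc i).2.
have w_fix lam (lam_gt0 : 0 < lam) := lam_uvec1_sub1E S_disj S_cover S_compact
  genA resRs consA phiC phi_sum p_le1 lam_gt0 (N_lt1 lam lam_gt0).
split=> [lam lam_gt0 a | p1 lam lam_gt0 a];
  pose w b := lam * uvec S Rs phi p (fun=> 1) lam b - 1;
  have w_fix_lam b : w b = (fine (p b setT) - 1) + \sum_c Nmat S Rs phi p lam b c * w c
    := w_fix lam lam_gt0 b.
- have fine_le1 b : fine (p b setT) <= 1.
    by move: (p_le1 b) (measure_ge0 (p b) setT); case: (p b setT).
  have N_ge0 := Nmat_ge0 S p phi_exc lam_gt0.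
  have w_le0 b : w b <= 0.
    apply: (sub_fixpoint_le0 (d := w) (N_lt1 lam lam_gt0) N_ge0) => {}b.
    by rewrite [leLHS]w_fix_lam gerDr subr_le0.
  have : \sum_b Nmat S Rs phi p lam a b * w b <= 0.
    by apply: sumr_le0 => b _; rewrite mulr_ge0_le0.
  by have := w_fix_lam a; rewrite /w; lra.
- have : w a = 0.
    apply: (fixpoint_eq0 (d := w) (N_lt1 lam lam_gt0)) => b.
    by rewrite [LHS]w_fix_lam p1 /= subrr add0r.
  by rewrite /w => /eqP; rewrite subr_eq0 => /eqP.
Qed.
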